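(* For $n\in\mathbb{N}$, let $f(n)\in\mathbb{N}\cup\{+\infty\}$ denote the largest number (supremum) of pairwise inequivalent nice bases that a real nilpotent Lie algebra of dimension $n$ can carry. Then the function $f\colon\mathbb{N}\to\mathbb{N}\cup\{+\infty\}$ is nondecreasing and unbounded; more precisely, for every $n$, \[f(n)\geq \left\lfloor\frac n6\right\rfloor+1.\]
   Context: Let $\mathfrak{g}$ be a real Lie algebra with basis $\mathcal B=\{e_1,\dots,e_n\}$ and dual basis $\{e^1,\dots,e^n\}$, and let $d$ denote the Chevalley–Eilenberg differential ($de^k(x,y)=-e^k([x,y])$). The basis $\mathcal B$ is called nice if (i) for all $i,j$, $[e_i,e_j]$ is a (possibly zero) multiple of some element of $\mathcal B$, and (ii) for all $i,j$, the contraction $e_i\lrcorner\, de^j$ is a multiple of some element of $\{e^1,\dots,e^n\}$. Two nice bases $\mathcal B_1$ of $\mathfrak{g}_1$ and $\mathcal B_2$ of $\mathfrak{g}_2$ are equivalent if there is a Lie algebra isomorphism $\mathfrak{g}_1\to\mathfrak{g}_2$ mapping each element of $\mathcal B_1$ to a multiple of an element of $\mathcal B_2$. *)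

From HB Require Import structures.
From mathcomp Require Import all_boot all_order all_algebra.
From mathcomp Require Import boolp classical_sets reals ereal Rstruct.
Set Implicit Arguments. Unset Strict Implicit. Unset Printing Implicit Defensive.
Import Order.TTheory GRing.Theory Num.Theory.
Local Open Scope ring_scope.

Definition RR : realType := Rdefinitions.R.

Notation vec n := ('rV[RR]_n).

Definition is_lie_bracket (n : nat) (br : vec n -> vec n -> vec n) : Prop :=
  [/\ (forall (a : RR) x y z, br (a *: x + y) z = a *: br x z + br y z),
      (forall (a : RR) x y z, br z (a *: x + y) = a *: br z x + br z y),
      (forall x, br x x = 0) &
      (forall x y z, br x (br y z) + br y (br z x) + br z (br x y) = 0)].

Fixpoint iter_br (n : nat) (br : vec n -> vec n -> vec n) (xs : seq (vec n)) (y : vec n)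
  : vec n :=
  match xs with
  | [::] => y
  | x :: xs' => br x (iter_br br xs' y)
  end.

(* Nilpotent: the lower central series reaches 0, i.e. all sufficiently long
   iterated brackets vanish. *)
Definition is_nilpotent (n : nat) (br : vec n -> vec n -> vec n) : Prop :=
  exists k : nat, forall (xs : seq (vec n)) (y : vec n), size xs = k -> iter_br br xs y = 0.

Definition nilpotent_lie (n : nat) (br : vec n -> vec n -> vec n) : Prop :=
  is_lie_bracket br /\ is_nilpotent br.

Definition basis_mx (n : nat) (e : 'I_n -> vec n) : 'M[RR]_n := \matrix_(i < n) e i.

Definition is_basis (n : nat) (e : 'I_n -> vec n) : Prop := basis_mx e \in unitmx.

(* Dual basis: e^j(v) is the j-th coordinate of v in the basis e. *)
Definition dual (n : nat) (e : 'I_n -> vec n) (j : 'I_n) (v : vec n) : RR :=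
  (v *m invmx (basis_mx e)) 0 j.

(* Chevalley--Eilenberg differential of a 1-form: (d alpha)(x,y) = - alpha([x,y]). *)
Definition d1 (n : nat) (br : vec n -> vec n -> vec n) (alpha : vec n -> RR)
  (x y : vec n) : RR := - alpha (br x y).

Definition nice_basis (n : nat) (br : vec n -> vec n -> vec n) (e : 'I_n -> vec n) : Prop :=
  [/\ is_basis e,
      (forall i j : 'I_n, exists (k : 'I_n) (c : RR), br (e i) (e j) = c *: e k) &
      (forall i j : 'I_n, exists (k : 'I_n) (c : RR),
          forall y : vec n, d1 br (dual e j) (e i) y = c * dual e k y)].

Definition lie_automorphism (n : nat) (br : vec n -> vec n -> vec n) (phi : vec n -> vec n)
  : Prop :=
  [/\ (forall (a : RR) x y, phi (a *: x + y) = a *: phi x + phi y),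
      bijective phi &
      (forall x y, phi (br x y) = br (phi x) (phi y))].

Definition equiv_nice (n : nat) (br : vec n -> vec n -> vec n) (e1 e2 : 'I_n -> vec n)
  : Prop :=
  exists phi : vec n -> vec n, lie_automorphism br phi /\
    forall i : 'I_n, exists (j : 'I_n) (c : RR), phi (e1 i) = c *: e2 j.

Definition carries (n m : nat) : Prop :=
  exists br : vec n -> vec n -> vec n, nilpotent_lie br /\
    exists B : 'I_m -> 'I_n -> vec n,
      (forall k, nice_basis br (B k)) /\
      (forall k l : 'I_m, k != l -> ~ equiv_nice br (B k) (B l)).

(* f(n) in N u {+oo}, as a supremum in the extended reals. *)
Definition f (n : nat) : \bar RR :=
  ereal_sup [set (m%:R)%:E | m in [set m : nat | carries n m]].

(* An invariant of nice bases up to equivalence is the number of basis vectors x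
   for which ad x has rank at least 2.  On h3 (+) h3, the direct sum of two
   Heisenberg algebras, the standard basis has no such vector while the basis
   e_p + f_p, e_p - f_p has four, so on (h3 (+) h3)^k the k + 1 bases obtained by
   twisting j of the summands, 0 <= j <= k, are pairwise inequivalent; padding
   with abelian summands gives f(n) >= n/6 + 1.
   Monotonicity comes from adding a central line R: an automorphism phi of
   R (+) g matching two extended nice bases yields an automorphism of g matching
   the original ones, namely u |-> pr_g phi(u) + (R-component of phi(u)) w, where
   w = pr_g phi(1) is central in g. *)

From HB Require Import structures.
From mathcomp Require Import all_boot all_order all_algebra perm.
From mathcomp Require Import boolp classical_sets reals ereal Rstruct.
From mathcomp Require Import ring.
Set Implicit Arguments. Unset Strict Implicit. Unset Printing Implicit Defensive.
Import Order.TTheory GRing.Theory Num.Theory.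
Local Open Scope ring_scope.

Section Coordinates.
Variable n : nat.
Implicit Types (e : 'I_n -> vec n) (v : vec n).

Fact dual_is_linear e j : linear_for *%R (dual e j).
Proof. by move=> a u v; rewrite /dual mulmxDl -scalemxAl !mxE. Qed.
HB.instance Definition _ e j :=
  GRing.isLinear.Build RR (vec n) RR *%R (dual e j) (dual_is_linear e j).

Lemma mulmx_basis e (w : 'rV_n) : w *m basis_mx e = \sum_j w 0 j *: e j.
Proof. by rewrite mulmx_sum_row; apply: eq_bigr => j _; rewrite rowK. Qed.

Lemma is_basis_spanning e :
  (forall v, exists w : 'I_n -> RR, v = \sum_j w j *: e j) -> is_basis e.
Proof.
move=> span; have [w Hw] := choice span.
pose N := \matrix_i \row_j w (delta_mx 0 i) j.
suff: N *m basis_mx e = 1%:M by case/mulmx1_unit.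
apply/row_matrixP => i; rewrite row_mul rowK mulmx_basis row1 [RHS]Hw.
by apply: eq_bigr => j _; rewrite mxE.
Qed.

Lemma dual_coord e (w : 'I_n -> RR) v :
  is_basis e -> v = \sum_j w j *: e j -> forall j, dual e j v = w j.
Proof.
move=> He -> j; rewrite /dual.
have -> : \sum_j w j *: e j = \row_j w j *m basis_mx e.
  by rewrite mulmx_basis; apply: eq_bigr => k _; rewrite mxE.
by rewrite mulmxK // mxE.
Qed.

Lemma basis_expand e v : is_basis e -> v = \sum_j dual e j v *: e j.
Proof. by move=> He; rewrite -mulmx_basis /dual mulmxKV. Qed.

Lemma dual_basis e i j : is_basis e -> dual e j (e i) = (i == j)%:R.
Proof.
move=> He; apply: (dual_coord (w := fun j => (i == j)%:R)) => //.
rewrite (bigD1 i) //= eqxx scale1r big1 ?addr0 // => k.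
by rewrite eq_sym => /negbTE ->; rewrite scale0r.
Qed.

Lemma basis_neq0 e i : is_basis e -> e i != 0.
Proof.
move=> He; apply/eqP => ei0; have := dual_basis i i He.
by rewrite ei0 linear0 eqxx => /eqP; rewrite eq_sym oner_eq0.
Qed.

End Coordinates.

Definition std_basis (m : nat) (p : 'I_m) : vec m := delta_mx 0 p.

Lemma std_is_basis m : is_basis (@std_basis m).
Proof.
rewrite /is_basis (_ : basis_mx _ = 1%:M) ?unitmx1 //.
by apply/row_matrixP => i; rewrite rowK row1.
Qed.

Lemma dual_std m (p : 'I_m) v : dual (@std_basis m) p v = v 0 p.
Proof.
apply: dual_coord; first exact: std_is_basis.
exact: row_sum_delta.
Qed.

Section LieBracket.
Variables (n : nat) (br : vec n -> vec n -> vec n).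
Hypothesis Hbr : is_lie_bracket br.

Lemma brDl x y z : br (x + y) z = br x z + br y z.
Proof. by case: Hbr => H _ _ _; have := H 1 x y z; rewrite !scale1r. Qed.
Lemma brDr x y z : br z (x + y) = br z x + br z y.
Proof. by case: Hbr => _ H _ _; have := H 1 x y z; rewrite !scale1r. Qed.
Lemma br0l x : br 0 x = 0.
Proof. by apply: (addrI (br 0 x)); rewrite -brDl !addr0. Qed.
Lemma br0r x : br x 0 = 0.
Proof. by apply: (addrI (br x 0)); rewrite -brDr !addr0. Qed.
Lemma brZl a x z : br (a *: x) z = a *: br x z.
Proof. by case: Hbr => H _ _ _; have := H a x 0 z; rewrite !addr0 br0l addr0. Qed.
Lemma brZr a x z : br z (a *: x) = a *: br z x.
Proof. by case: Hbr => _ H _ _; have := H a x 0 z; rewrite !addr0 br0r addr0. Qed.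
Lemma br_sumr (I : finType) (F : I -> vec n) z : br z (\sum_i F i) = \sum_i br z (F i).
Proof. by apply: (big_morph _ (fun x y => brDr x y z)); rewrite br0r. Qed.
Lemma brC x y : br x y = - br y x.
Proof.
case: Hbr => _ _ Halt _; apply/eqP; rewrite -addr_eq0.
by have := Halt (x + y); rewrite brDl !brDr !Halt add0r addr0 => ->.
Qed.

Definition coord_bracket_uniq (e : 'I_n -> vec n) := forall i k l l',
  dual e k (br (e i) (e l)) != 0 -> dual e k (br (e i) (e l')) != 0 -> l = l'.

Lemma nice_basisP e : nice_basis br e <->
  [/\ is_basis e, (forall i j, exists k (c : RR), br (e i) (e j) = c *: e k)
    & coord_bracket_uniq e].
Proof.
split=> [[He closed d_sparse]|[He closed uniq]].
  split=> // i k l l'; have [k' [c Hc]] := d_sparse i k.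
  have supp m : dual e k (br (e i) (e m)) != 0 -> m = k'.
    have := Hc (e m); rewrite /d1 dual_basis // => /eqP; rewrite eqr_oppLR => /eqP ->.
    by case: (@eqP _ m k') => [//|_]; rewrite mulr0 oppr0 eqxx.
  by move=> /supp -> /supp ->.
split=> // i j; have [[l0 Hl0]|Hnone] :=
  pselect (exists l, dual e j (br (e i) (e l)) != 0); last first.
  exists i, 0 => y; rewrite mul0r /d1 (basis_expand y He) br_sumr linear_sum big1 ?oppr0 //.
  move=> l _; rewrite brZr linearZ /=.
  have [->|Hnz] := eqVneq (dual e j (br (e i) (e l))) 0; first by rewrite mulr0.
  by case: Hnone; exists l.
exists l0, (- dual e j (br (e i) (e l0))) => y.
rewrite /d1 {1}(basis_expand y He) br_sumr linear_sum (bigD1 l0) //= big1.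
  by rewrite addr0 brZr linearZ /= mulrC mulNr.
move=> l Hl; rewrite brZr linearZ /=.
have [->|Hnz] := eqVneq (dual e j (br (e i) (e l))) 0; first by rewrite mulr0.
by move: Hl; rewrite (uniq _ _ _ _ Hnz Hl0) eqxx.
Qed.

Definition ad_rank_ge2 (x : vec n) := exists y y', forall a b : RR,
  a *: br x y + b *: br x y' = 0 -> a = 0 /\ b = 0.

Definition count_ad_rank_ge2 (e : 'I_n -> vec n) : nat :=
  \sum_i `[< ad_rank_ge2 (e i) >].

Lemma ad_rank_ge2Z c x : c != 0 -> ad_rank_ge2 (c *: x) <-> ad_rank_ge2 x.
Proof.
move=> c0; split=> -[y [y' free]]; exists y, y' => a b.
  move=> Hab; have [] := free (a / c) (b / c); first by rewrite !brZl !scalerA !divfK.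
  by move=> /eqP + /eqP; rewrite !mulf_eq0 !invr_eq0 (negbTE c0) !orbF => /eqP -> /eqP ->.
rewrite !brZl !scalerA => /free [/eqP + /eqP].
by rewrite !mulf_eq0 (negbTE c0) !orbF => /eqP -> /eqP ->.
Qed.

Section Automorphism.
Variable phi : vec n -> vec n.
Hypothesis Hphi : lie_automorphism br phi.

HB.instance Definition _ := GRing.isLinear.Build RR (vec n) (vec n) *:%R phi
  (let: And3 lin _ _ := Hphi in lin).

Lemma aut_br x y : phi (br x y) = br (phi x) (phi y).
Proof. by case: Hphi. Qed.

Lemma aut_inj : injective phi.
Proof. by case: Hphi => _ /bij_inj. Qed.

Lemma aut_eq0 x : (phi x == 0) = (x == 0).
Proof. by rewrite -[in LHS](linear0 phi) (inj_eq aut_inj). Qed.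

Lemma ad_rank_ge2_aut x : ad_rank_ge2 (phi x) <-> ad_rank_ge2 x.
Proof.
case: Hphi => _ [g phiK gK] _; split=> -[y [y' free]].
  exists (g y), (g y'); move=> a b /(congr1 phi).
  rewrite linear0 linearD !linearZ /= !aut_br !gK; exact: free.
exists (phi y), (phi y'); move=> a b /eqP; rewrite -!aut_br -!linearZ -linearD aut_eq0.
by move/eqP; exact: free.
Qed.

Lemma aut_basis_index_inj e e' (sc : 'I_n -> 'I_n) (c : 'I_n -> RR) :
  is_basis e -> (forall i, c i != 0) -> (forall i, phi (e i) = c i *: e' (sc i)) ->
  injective sc.
Proof.
move=> He c0 phiE i i' sc_ii'; apply/eqP/negP => /negP ii'.
have : c i' *: e i - c i *: e i' == 0.
  by rewrite -aut_eq0 linearB !linearZ /= !phiE sc_ii' scalerN !scalerA mulrC subrr.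
move=> /eqP/(congr1 (dual e i)).
rewrite linear0 linearB !linearZ /= !dual_basis // eqxx eq_sym (negbTE ii') mulr0 subr0 mulr1.
by apply/eqP.
Qed.

End Automorphism.

Lemma equiv_nice_data e e' : is_basis e -> is_basis e' -> equiv_nice br e e' ->
  exists phi (sc : 'I_n -> 'I_n) (c : 'I_n -> RR),
    [/\ lie_automorphism br phi, forall i, phi (e i) = c i *: e' (sc i),
        injective sc & forall i, c i != 0].
Proof.
move=> He He' [phi [Hphi Hmap]].
have [sc Hsc] := choice Hmap; have [c phiE] := choice Hsc.
have c0 i : c i != 0.
  apply: contra_neq (basis_neq0 i He) => ci0.
  by apply/eqP; rewrite -(aut_eq0 Hphi) phiE ci0 scale0r.
by exists phi, sc, c; split=> //; exact: aut_basis_index_inj phiE.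
Qed.

Lemma count_ad_rank_ge2_equiv e e' : is_basis e -> is_basis e' ->
  equiv_nice br e e' -> count_ad_rank_ge2 e = count_ad_rank_ge2 e'.
Proof.
move=> He He' /(equiv_nice_data He He') [phi [sc [c [Hphi Hc sc_inj c0]]]].
rewrite /count_ad_rank_ge2 [RHS](reindex_inj sc_inj) /=; apply: eq_bigr => i _.
congr (nat_of_bool (asbool _)); apply: propext.
by rewrite -(ad_rank_ge2_aut Hphi) Hc; exact: ad_rank_ge2Z.
Qed.

End LieBracket.

Section EquivCriterion.
Variables (n : nat) (br : vec n -> vec n -> vec n) (e e' : 'I_n -> vec n).
Hypotheses (He : is_basis e) (He' : is_basis e').
Variable psi : vec n -> vec n.
Hypothesis psi_linear : linear psi.
HB.instance Definition _ := GRing.isLinear.Build RR (vec n) (vec n) *:%R psi psi_linear.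

Lemma equiv_nice_hom (tau : 'I_n -> 'I_n) (d : 'I_n -> RR) :
  injective tau -> (forall i, d i != 0) -> (forall i, psi (e i) = d i *: e' (tau i)) ->
  {morph psi : x y / br x y} -> equiv_nice br e e'.
Proof.
move=> tau_inj d0 psiE psi_br; set t := fun i => d i *: e' (tau i).
have Ht : is_basis t.
  apply: is_basis_spanning => v; exists (fun i => dual e' (tau i) v / d i).
  rewrite {1}(basis_expand v He') (reindex_inj tau_inj).
  by apply: eq_bigr => i _; rewrite scalerA divfK.
have psi_expand v : psi v = \sum_i dual e i v *: t i.
  rewrite {1}(basis_expand v He) linear_sum; apply: eq_bigr => i _.
  by rewrite linearZ /= psiE.
exists psi; split; last by move=> i; exists (tau i), (d i).
split=> //; exists (fun v => \sum_j dual t j v *: e j) => v.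
  rewrite [RHS](basis_expand v He); apply: eq_bigr => j _.
  by rewrite -(dual_coord Ht (psi_expand v)).
rewrite [RHS](basis_expand v Ht) psi_expand; apply: eq_bigr => j _.
by congr (_ *: _); exact: (dual_coord (w := fun j => dual t j v) He).
Qed.

End EquivCriterion.

Lemma split_lshift (a b : nat) (i : 'I_a) : split (lshift b i) = inl i.
Proof. exact: (unsplitK (inl i)). Qed.
Lemma split_rshift (a b : nat) (j : 'I_b) : split (rshift a j) = inr j.
Proof. exact: (unsplitK (inr j)). Qed.

Lemma sum_row_mx (a b : nat) (I : finType) (F : I -> vec a) (G : I -> vec b) :
  \sum_i row_mx (F i) (G i) = row_mx (\sum_i F i) (\sum_i G i).
Proof.
apply: (big_rec3 (fun x y z => x = row_mx y z)); first by rewrite row_mx0.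
by move=> i x y z _ ->; rewrite add_row_mx.
Qed.

Lemma iter_br_cat (m : nat) (br : vec m -> vec m -> vec m) xs ys y :
  iter_br br (xs ++ ys) y = iter_br br xs (iter_br br ys y).
Proof. by elim: xs => //= x xs ->. Qed.

Lemma is_nilpotent_ge (m : nat) (br : vec m -> vec m -> vec m) k :
  (forall xs y, size xs = k -> iter_br br xs y = 0) ->
  forall xs y, (k <= size xs)%N -> iter_br br xs y = 0.
Proof.
move=> Hk xs y k_le; rewrite -(cat_take_drop k xs) iter_br_cat.
by apply: Hk; rewrite size_takel.
Qed.

Section DirectSum.
Variables (a b : nat) (br1 : vec a -> vec a -> vec a) (br2 : vec b -> vec b -> vec b).

Definition dsum (u v : vec (a + b)) : vec (a + b) :=
  row_mx (br1 (lsubmx u) (lsubmx v)) (br2 (rsubmx u) (rsubmx v)).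

Lemma dsum_row_mx x1 x2 y1 y2 :
  dsum (row_mx x1 x2) (row_mx y1 y2) = row_mx (br1 x1 y1) (br2 x2 y2).
Proof. by rewrite /dsum !row_mxKl !row_mxKr. Qed.

Lemma dsum_lie : is_lie_bracket br1 -> is_lie_bracket br2 -> is_lie_bracket dsum.
Proof.
case=> [L1 R1 A1 J1] [L2 R2 A2 J2]; split.
- by move=> c x y z; rewrite /dsum !linearP /= L1 L2 scale_row_mx add_row_mx.
- by move=> c x y z; rewrite /dsum !linearP /= R1 R2 scale_row_mx add_row_mx.
- by move=> x; rewrite /dsum A1 A2 row_mx0.
- by move=> x y z; rewrite /dsum !row_mxKl !row_mxKr !add_row_mx J1 J2 row_mx0.
Qed.

Lemma lsubmx_iter_dsum xs y :
  lsubmx (iter_br dsum xs y) = iter_br br1 (map lsubmx xs) (lsubmx y).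
Proof. by elim: xs => //= x xs <-; rewrite /dsum row_mxKl. Qed.
Lemma rsubmx_iter_dsum xs y :
  rsubmx (iter_br dsum xs y) = iter_br br2 (map rsubmx xs) (rsubmx y).
Proof. by elim: xs => //= x xs <-; rewrite /dsum row_mxKr. Qed.

Lemma dsum_nilpotent : nilpotent_lie br1 -> nilpotent_lie br2 -> nilpotent_lie dsum.
Proof.
case=> L1 [k1 N1] [L2 [k2 N2]]; split; first exact: dsum_lie.
exists (maxn k1 k2) => xs y size_xs.
rewrite -[iter_br _ _ _]hsubmxK lsubmx_iter_dsum rsubmx_iter_dsum.
by rewrite (is_nilpotent_ge N1) ?(is_nilpotent_ge N2) ?row_mx0 // size_map size_xs
  ?leq_maxl ?leq_maxr.
Qed.

Variables (e1 : 'I_a -> vec a) (e2 : 'I_b -> vec b).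

Definition dbasis (k : 'I_(a + b)) : vec (a + b) :=
  match split k with inl i => row_mx (e1 i) 0 | inr j => row_mx 0 (e2 j) end.

Lemma dbasis_l i : dbasis (lshift b i) = row_mx (e1 i) 0.
Proof. by rewrite /dbasis split_lshift. Qed.
Lemma dbasis_r j : dbasis (rshift a j) = row_mx 0 (e2 j).
Proof. by rewrite /dbasis split_rshift. Qed.

Hypotheses (He1 : is_basis e1) (He2 : is_basis e2).

Definition dsum_coord (v : vec (a + b)) (k : 'I_(a + b)) : RR :=
  match split k with inl i => dual e1 i (lsubmx v) | inr j => dual e2 j (rsubmx v) end.

Lemma dbasis_expand v : v = \sum_k dsum_coord v k *: dbasis k.
Proof.
rewrite big_split_ord /=.
under eq_bigr do rewrite /dsum_coord dbasis_l split_lshift scale_row_mx scaler0.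
under [X in _ = _ + X]eq_bigr do rewrite /dsum_coord dbasis_r split_rshift scale_row_mx scaler0.
rewrite !sum_row_mx add_row_mx !big1_eq addr0 add0r.
by rewrite -(basis_expand _ He1) -(basis_expand _ He2) hsubmxK.
Qed.

Lemma dbasis_is_basis : is_basis dbasis.
Proof. by apply: is_basis_spanning => v; exists (dsum_coord v); apply: dbasis_expand. Qed.

Lemma dual_dbasis_l v i : dual dbasis (lshift b i) v = dual e1 i (lsubmx v).
Proof.
by rewrite (dual_coord dbasis_is_basis (dbasis_expand v)) /dsum_coord split_lshift.
Qed.
Lemma dual_dbasis_r v j : dual dbasis (rshift a j) v = dual e2 j (rsubmx v).
Proof.
by rewrite (dual_coord dbasis_is_basis (dbasis_expand v)) /dsum_coord split_rshift.
Qed.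

Hypotheses (Hbr1 : is_lie_bracket br1) (Hbr2 : is_lie_bracket br2).

Lemma dsum_nice : nice_basis br1 e1 -> nice_basis br2 e2 -> nice_basis dsum dbasis.
Proof.
move=> /(nice_basisP Hbr1) [_ M1 U1] /(nice_basisP Hbr2) [_ M2 U2].
apply/(nice_basisP (dsum_lie Hbr1 Hbr2)); split; first exact: dbasis_is_basis.
- move=> k l; case: (split_ordP k) => i ->; case: (split_ordP l) => j ->;
    rewrite ?dbasis_l ?dbasis_r dsum_row_mx ?(br0l Hbr1) ?(br0r Hbr1) ?(br0l Hbr2)
      ?(br0r Hbr2) ?row_mx0.
  + by have [m [c ->]] := M1 i j; exists (lshift b m), c; rewrite dbasis_l scale_row_mx scaler0.
  + by exists (lshift b i), 0; rewrite scale0r.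
  + by exists (lshift b j), 0; rewrite scale0r.
  + by have [m [c ->]] := M2 i j; exists (rshift a m), c; rewrite dbasis_r scale_row_mx scaler0.
- move=> i k l l'; case: (split_ordP i) => {}i ->; case: (split_ordP k) => {}k ->;
  case: (split_ordP l) => {}l ->; case: (split_ordP l') => {}l' ->;
  rewrite ?dbasis_l ?dbasis_r ?dsum_row_mx ?dual_dbasis_l ?dual_dbasis_r ?row_mxKl ?row_mxKr
    ?(br0l Hbr1) ?(br0r Hbr1) ?(br0l Hbr2) ?(br0r Hbr2) ?linear0 ?eqxx //.
  + by move=> H H'; rewrite (U1 _ _ _ _ H H').
  + by move=> H H'; rewrite (U2 _ _ _ _ H H').
Qed.

Lemma ad_rank_ge2_dsum_l u : ad_rank_ge2 dsum (row_mx u 0) <-> ad_rank_ge2 br1 u.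
Proof.
split=> -[y [y' free]].
  exists (lsubmx y), (lsubmx y'); move=> al be Hab; apply: free.
  by rewrite /dsum !row_mxKl !row_mxKr !(br0l Hbr2) !scale_row_mx !scaler0 add_row_mx Hab
    addr0 row_mx0.
exists (row_mx y 0), (row_mx y' 0); move=> al be.
rewrite !dsum_row_mx !(br0l Hbr2) !scale_row_mx !scaler0 add_row_mx addr0 -row_mx0.
by case/eq_row_mx => /free.
Qed.

Lemma ad_rank_ge2_dsum_r v : ad_rank_ge2 dsum (row_mx 0 v) <-> ad_rank_ge2 br2 v.
Proof.
split=> -[y [y' free]].
  exists (rsubmx y), (rsubmx y'); move=> al be Hab; apply: free.
  by rewrite /dsum !row_mxKl !row_mxKr !(br0l Hbr1) !scale_row_mx !scaler0 add_row_mx Hab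
    addr0 row_mx0.
exists (row_mx 0 y), (row_mx 0 y'); move=> al be.
rewrite !dsum_row_mx !(br0l Hbr1) !scale_row_mx !scaler0 add_row_mx addr0 -row_mx0.
by case/eq_row_mx => _ /free.
Qed.

Lemma count_ad_rank_ge2_dsum :
  count_ad_rank_ge2 dsum dbasis = (count_ad_rank_ge2 br1 e1 + count_ad_rank_ge2 br2 e2)%N.
Proof.
rewrite /count_ad_rank_ge2 big_split_ord; congr addn; apply: eq_bigr => i _.
  by rewrite dbasis_l (propext (ad_rank_ge2_dsum_l _)).
by rewrite dbasis_r (propext (ad_rank_ge2_dsum_r _)).
Qed.

End DirectSum.

Definition abelian_br (m : nat) (u v : vec m) : vec m := 0.

Lemma abelian_lie m : is_lie_bracket (@abelian_br m).
Proof. by split=> *; rewrite /abelian_br ?scaler0 ?addr0. Qed.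

Lemma abelian_nilpotent m : nilpotent_lie (@abelian_br m).
Proof. by split; [exact: abelian_lie | exists 1%N => -[|x []]]. Qed.

Lemma std_nice_abelian m : nice_basis (@abelian_br m) (@std_basis m).
Proof.
apply/(nice_basisP (abelian_lie m)); split; first exact: std_is_basis.
  by move=> i j; exists i, 0; rewrite scale0r.
by move=> i k l l'; rewrite /abelian_br linear0 eqxx.
Qed.

Section CentralExtension.
Variables (n : nat) (br : vec n -> vec n -> vec n).
Hypothesis Hbr : is_lie_bracket br.
Local Notation br1 := (dsum (@abelian_br 1) br).
Local Notation ext e := (dbasis (@std_basis 1) e).
Variables (e e' : 'I_n -> vec n).
Hypotheses (He : is_basis e) (He' : is_basis e').

Section Fold.
Variable phi : vec (1 + n) -> vec (1 + n).
Hypothesis Hphi : lie_automorphism br1 phi.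
HB.instance Definition _ := GRing.isLinear.Build RR (vec (1 + n)) (vec (1 + n)) *:%R phi
  (let: And3 lin _ _ := Hphi in lin).
Variables (sc : 'I_(1 + n) -> 'I_(1 + n)) (c : 'I_(1 + n) -> RR).
Hypotheses (phiE : forall k, phi (ext e k) = c k *: ext e' (sc k)).
Hypotheses (sc_inj : injective sc) (c0 : forall k, c k != 0).

Let o : 'I_(1 + n) := lshift n ord0.
Let w := rsubmx (phi (ext e o)).

Lemma central_image u : br w u = 0.
Proof.
case: Hphi => _ [g _ gK] _; have := aut_br Hphi (ext e o) (g (row_mx 0 u)).
rewrite gK {1}/dsum dbasis_l row_mxKr (br0l Hbr) /abelian_br row_mx0 linear0.
rewrite /dsum row_mxKr => /esym; rewrite -row_mx0 => /eq_row_mx [_ wu0].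
by rewrite /w dbasis_l.
Qed.

Let fold (u : vec (1 + n)) : vec n := rsubmx u + lsubmx u 0 0 *: w.

Lemma fold_linear : linear fold.
Proof.
move=> a u v; rewrite /fold !linearP /= !mxE scalerDl -scalerA scalerDr.
by rewrite addrACA.
Qed.

Lemma foldZ a u : fold (a *: u) = a *: fold u.
Proof. by rewrite /fold !linearZ /= mxE scalerDr scalerA. Qed.

Lemma fold_br x y : fold (br1 x y) = br (fold x) (fold y).
Proof.
rewrite /fold /dsum row_mxKl row_mxKr /abelian_br mxE scale0r addr0.
rewrite (brDl Hbr) !(brDr Hbr) !(brZl Hbr) !central_image (brZr Hbr) (brC Hbr _ w).
by rewrite central_image oppr0 !scaler0 !addr0.
Qed.

Let psi (v : vec n) : vec n := fold (phi (row_mx 0 v)).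

Lemma psi_linear : linear psi.
Proof.
move=> a u v; rewrite /psi.
have -> : row_mx 0 (a *: u + v) = a *: row_mx 0 u + row_mx 0 v :> vec (1 + n).
  by rewrite scale_row_mx add_row_mx scaler0 addr0.
by rewrite linearP fold_linear.
Qed.

Lemma psi_br : {morph psi : x y / br x y}.
Proof.
by move=> x y; rewrite /psi -fold_br -(aut_br Hphi) dsum_row_mx /abelian_br.
Qed.

(* [sigma] fixes [o], hence restricts to a permutation of the indices of [e]. *)
Let sigma k := tperm o (sc o) (sc k).

Lemma sigma_inj : injective sigma.
Proof. by move=> k l /perm_inj /sc_inj. Qed.

Lemma sigma_neq_o k : k != o -> sigma k != o.
Proof.
have sigma_o : sigma o = o by rewrite /sigma tpermR.
by apply: contra_neq => sigma_k; apply: sigma_inj; rewrite sigma_k sigma_o.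
Qed.

Let tau i : 'I_n :=
  match split (sigma (rshift 1 i)) with inr j => j | inl _ => i end.

Lemma rshift_tau i : rshift 1 (tau i) = sigma (rshift 1 i).
Proof.
have : sigma (rshift 1 i) != o by apply: sigma_neq_o; rewrite -val_eqE.
by rewrite /tau; case: (split_ordP (sigma (rshift 1 i))) => j ->; rewrite ?(ord1 j) ?eqxx.
Qed.

Lemma tau_inj : injective tau.
Proof. by move=> i j /(congr1 (@rshift 1 n)); rewrite !rshift_tau => /sigma_inj /rshift_inj. Qed.

Let d i := c (rshift 1 i) * (if sc (rshift 1 i) == o then c o else 1).

Lemma d_neq0 i : d i != 0.
Proof. by rewrite mulf_neq0 //; case: ifP; rewrite ?oner_neq0. Qed.

Lemma fold_ext k : k != sc o ->
  fold (ext e' k) = (if k == o then c o else 1) *: rsubmx (ext e' (tperm o (sc o) k)).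
Proof.
case: (split_ordP k) => j ->.
  rewrite (ord1 j) eqxx tpermL /fold dbasis_l row_mxKl row_mxKr /std_basis mxE !eqxx.
  by rewrite scale1r add0r /w phiE linearZ.
move=> ne; have o_ne : o != rshift 1 j by rewrite -val_eqE.
rewrite tpermD 1?eq_sym // (negbTE o_ne).
by rewrite /fold dbasis_r row_mxKl row_mxKr mxE scale0r addr0 scale1r.
Qed.

Lemma psiE i : psi (e i) = d i *: e' (tau i).
Proof.
have sc_ne : sc (rshift 1 i) != sc o by rewrite (inj_eq sc_inj) -val_eqE.
rewrite /psi -(dbasis_r (@std_basis 1)) phiE foldZ fold_ext // -/(sigma _) -rshift_tau.
by rewrite dbasis_r row_mxKr scalerA.
Qed.

Lemma fold_equiv : equiv_nice br e e'.
Proof. exact: (equiv_nice_hom He He' psi_linear tau_inj d_neq0 psiE psi_br). Qed.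

End Fold.

Lemma equiv_nice_central_ext : equiv_nice br1 (ext e) (ext e') -> equiv_nice br e e'.
Proof.
have ext_basis := dbasis_is_basis (std_is_basis 1).
case/(equiv_nice_data (ext_basis _ _ He) (ext_basis _ _ He')).
by move=> phi [sc [c [Hphi phiE sc_inj c0]]]; exact: fold_equiv phiE sc_inj c0.
Qed.

End CentralExtension.

Lemma carries_succ n m : carries n m -> carries n.+1 m.
Proof.
case=> br [Nbr [B [B_nice B_ineq]]]; have Hbr : is_lie_bracket br by case: Nbr.
have B_basis k : is_basis (B k) by case: (B_nice k).
exists (dsum (@abelian_br 1) br); split; first exact: dsum_nilpotent (abelian_nilpotent 1) Nbr.
exists (fun k => dbasis (@std_basis 1) (B k)); split.
  move=> k; exact: dsum_nice (std_is_basis 1) (B_basis k) (abelian_lie 1) Hbr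
    (std_nice_abelian 1) (B_nice k).
move=> k l kl /(equiv_nice_central_ext Hbr (B_basis k) (B_basis l)).
exact: B_ineq.
Qed.

Definition i0 : 'I_3 := @Ordinal 3 0 isT.
Definition i1 : 'I_3 := @Ordinal 3 1 isT.
Definition i2 : 'I_3 := @Ordinal 3 2 isT.

Definition heis_form (u v : vec 3) : RR := u 0 i0 * v 0 i1 - u 0 i1 * v 0 i0.
Definition heis (u v : vec 3) : vec 3 := heis_form u v *: std_basis i2.

Lemma heis_formDl (a : RR) x y z :
  heis_form (a *: x + y) z = a * heis_form x z + heis_form y z.
Proof. by rewrite /heis_form !mxE; ring. Qed.
Lemma heis_formDr (a : RR) x y z :
  heis_form z (a *: x + y) = a * heis_form z x + heis_form z y.
Proof. by rewrite /heis_form !mxE; ring. Qed.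
Lemma heis_form_std2l v : heis_form (std_basis i2) v = 0.
Proof. by rewrite /heis_form !mxE /= !mul0r subrr. Qed.
Lemma heis_form_center u a : heis_form u (a *: std_basis i2) = 0.
Proof. by rewrite /heis_form !mxE /= !mulr0 subrr. Qed.

Lemma heis_lie : is_lie_bracket heis.
Proof.
split.
- by move=> a x y z; rewrite /heis heis_formDl scalerDl scalerA.
- by move=> a x y z; rewrite /heis heis_formDr scalerDl scalerA.
- by move=> x; rewrite /heis /heis_form mulrC subrr scale0r.
- by move=> x y z; rewrite /heis !heis_form_center !scale0r !addr0.
Qed.

Lemma heis_nilpotent : nilpotent_lie heis.
Proof.
split; first exact: heis_lie.
by exists 2%N => -[|x [|y []]] // z _ /=; rewrite {1}/heis heis_form_center scale0r.
Qed.

Lemma heis_form_std_neq0 p q : heis_form (std_basis p) (std_basis q) != 0 ->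
  (p == i0) && (q == i1) || (p == i1) && (q == i0).
Proof.
rewrite /heis_form /std_basis !mxE /= ![i0 == _]eq_sym ![i1 == _]eq_sym.
by case: (p == i0); case: (q == i1); case: (p == i1); case: (q == i0);
  rewrite /= ?mulr1 ?mulr0 ?mul1r ?mul0r ?subrr ?subr0 ?eqxx.
Qed.

Lemma heis_form_std_uniq p q q' : heis_form (std_basis p) (std_basis q) != 0 ->
  heis_form (std_basis p) (std_basis q') != 0 -> q = q'.
Proof.
by move=> /heis_form_std_neq0 /orP [] /andP [/eqP -> /eqP ->]
  /heis_form_std_neq0 /orP [] /andP [/eqP H /eqP ->].
Qed.

Lemma heis_std_nice : nice_basis heis (@std_basis 3).
Proof.
apply/(nice_basisP heis_lie); split; first exact: std_is_basis.
  by move=> i j; exists i2, (heis_form (std_basis i) (std_basis j)).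
move=> i k l l'; rewrite !dual_std /heis !mxE !mulf_eq0 !negb_or.
by move=> /andP [H _] /andP [H' _]; exact: heis_form_std_uniq H H'.
Qed.

(* Every bracket of [heis] is a multiple of [std_basis i2]. *)
Lemma heis_ad_rank_lt2 x : ~ ad_rank_ge2 heis x.
Proof.
case=> y [y' free]; rewrite /heis in free.
have [al0|al0] := eqVneq (heis_form x y) 0.
  have [] := free 1 0; first by rewrite al0 !scale0r !scaler0 addr0.
  by move/eqP; rewrite oner_eq0.
have [] := free (heis_form x y') (- heis_form x y).
  by rewrite !scalerA -scalerDl mulNr mulrC subrr scale0r.
by move=> _ /eqP; rewrite oppr_eq0 (negbTE al0).
Qed.

Definition sgn (s : bool) : RR := if s then -1 else 1.
Definition side (k : 'I_(3 + 3)) : bool := if split k is inr _ then true else false.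
Definition pos (k : 'I_(3 + 3)) : 'I_3 := match split k with inl p => p | inr p => p end.
Definition at_side (s : bool) (p : 'I_3) : 'I_(3 + 3) := if s then rshift 3 p else lshift 3 p.

Lemma side_at s p : side (at_side s p) = s.
Proof. by case: s; rewrite /side /at_side ?split_lshift ?split_rshift. Qed.
Lemma pos_at s p : pos (at_side s p) = p.
Proof. by case: s; rewrite /pos /at_side ?split_lshift ?split_rshift. Qed.
Lemma at_side_pos k : at_side (side k) (pos k) = k.
Proof.
by case: (split_ordP k) => p ->; rewrite /side /pos ?split_lshift ?split_rshift.
Qed.

Local Notation heis2 := (dsum heis heis).

(* [twisted (lshift 3 p) = e_p + f_p] and [twisted (rshift 3 p) = e_p - f_p], where
   [e] and [f] are the standard bases of the two summands. *)
Definition twisted (k : 'I_(3 + 3)) : vec (3 + 3) :=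
  row_mx (std_basis (pos k)) (sgn (side k) *: std_basis (pos k)).

Lemma twisted_br k l : heis2 (twisted k) (twisted l) =
  heis_form (std_basis (pos k)) (std_basis (pos l)) *: twisted (at_side (side k (+) side l) i2).
Proof.
rewrite /twisted dsum_row_mx side_at pos_at (brZl heis_lie) (brZr heis_lie) scale_row_mx.
rewrite /heis !scalerA; congr (row_mx _ (_ *: _)).
by case: (side k); case: (side l); rewrite /sgn /=; ring.
Qed.

Lemma twisted_expand (v : vec (3 + 3)) :
  v = \sum_k ((lsubmx v 0 (pos k) + sgn (side k) * rsubmx v 0 (pos k)) / 2) *: twisted k.
Proof.
rewrite big_split_ord /= -big_split /=.
rewrite (eq_bigr (fun p => row_mx (lsubmx v 0 p *: std_basis p) (rsubmx v 0 p *: std_basis p))).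
  by rewrite sum_row_mx -!row_sum_delta hsubmxK.
move=> p _; rewrite /twisted /side /pos !split_lshift !split_rshift /sgn.
rewrite !scale_row_mx add_row_mx !scalerA -!scalerDl.
by congr (row_mx (_ *: _) (_ *: _)); field.
Qed.

Lemma twisted_is_basis : is_basis twisted.
Proof. exact/is_basis_spanning/(fun v => ex_intro _ _ (twisted_expand v)). Qed.

Lemma twisted_nice : nice_basis heis2 twisted.
Proof.
have Hbr := dsum_lie heis_lie heis_lie.
apply/(nice_basisP Hbr); split; first exact: twisted_is_basis.
  by move=> i j; eexists; eexists; exact: twisted_br.
move=> i k l l'; rewrite !twisted_br !linearZ /= !dual_basis; try exact: twisted_is_basis.
rewrite !mulf_eq0 !negb_or !pnatr_eq0 !eqb0 !negbK.
move=> /andP [H1 /eqP E1] /andP [H1' /eqP E2].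
have pos_ll' := heis_form_std_uniq H1 H1'.
have side_ll' : side l = side l'.
  have := congr1 side (etrans E1 (esym E2)); rewrite !side_at.
  by case: (side i); case: (side l); case: (side l').
by rewrite -(at_side_pos l) -(at_side_pos l') pos_ll' side_ll'.
Qed.

Lemma heis_form_std_other p : p != i2 ->
  heis_form (std_basis p) (std_basis (if p == i0 then i1 else i0)) != 0.
Proof.
have : (p == i0) || (p == i1) || (p == i2) by case: p => [[|[|[|m]]] Hp].
case/orP => [/orP [] /eqP ->|/eqP -> //]; rewrite /heis_form /std_basis !mxE /=.
  by rewrite !mulr1 !mulr0 subr0 oner_eq0.
by rewrite !mulr1 !mulr0 sub0r oppr_eq0 oner_eq0.
Qed.

Lemma twisted_ad_rank_ge2 k : `[< ad_rank_ge2 heis2 (twisted k) >] = (pos k != i2).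
Proof.
have [k2|k2] := eqVneq (pos k) i2.
  rewrite asboolF // => -[y [y' free]].
  have ad0 u : heis2 (twisted k) u = 0.
    by rewrite /dsum /twisted row_mxKl row_mxKr k2 (brZl heis_lie) /heis !heis_form_std2l
      !scale0r scaler0 row_mx0.
  have [] := free 1 0; first by rewrite !ad0 !scaler0 addr0.
  by move/eqP; rewrite oner_eq0.
rewrite asboolT //; set q := if pos k == i0 then i1 else i0.
exists (twisted (at_side false q)), (twisted (at_side true q)) => a b.
rewrite !twisted_br !side_at !pos_at !scalerA.
have side_ne : at_side (side k (+) true) i2 != at_side (side k (+) false) i2.
  by apply/eqP => /(congr1 side); rewrite !side_at; case: (side k).
move=> ab0; have := congr1 (dual twisted (at_side (side k (+) false) i2)) ab0.
have := congr1 (dual twisted (at_side (side k (+) true) i2)) ab0.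
rewrite !linear0 !linearD !linearZ /= !dual_basis; try exact: twisted_is_basis.
rewrite !eqxx (negbTE side_ne) eq_sym (negbTE side_ne) !mulr0 !mulr1 addr0 add0r.
move=> /eqP + /eqP; rewrite !mulf_eq0 (negbTE (heis_form_std_other k2)) !orbF.
by move=> /eqP -> /eqP ->.
Qed.

Lemma count_twisted : count_ad_rank_ge2 heis2 twisted = 4%N.
Proof.
rewrite /count_ad_rank_ge2; under eq_bigr do rewrite twisted_ad_rank_ge2.
rewrite big_split_ord /=.
under eq_bigr do rewrite /pos split_lshift.
under [X in (_ + X)%N]eq_bigr do rewrite /pos split_rshift.
by rewrite !big_ord_recr big_ord0.
Qed.

Lemma count_std_heis2 :
  count_ad_rank_ge2 heis2 (dbasis (@std_basis 3) (@std_basis 3)) = 0%N.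
Proof.
rewrite (count_ad_rank_ge2_dsum _ _ heis_lie heis_lie) /count_ad_rank_ge2.
by rewrite !big1 // => i _; rewrite asboolF //; exact: heis_ad_rank_lt2.
Qed.

(* Defined by recursion rather than as [6 * k] so that [vec (heis2_pow_dim k.+1)] is
   convertible to [vec (heis2_pow_dim k + (3 + 3))]. *)
Fixpoint heis2_pow_dim (k : nat) : nat :=
  if k is k'.+1 then (heis2_pow_dim k' + (3 + 3))%N else 0%N.

Lemma heis2_pow_dimE k : heis2_pow_dim k = (6 * k)%N.
Proof. by elim: k => //= k ->; rewrite mulnS addnC. Qed.

Lemma heis2_pow_bases k :
  exists br : vec (heis2_pow_dim k) -> vec (heis2_pow_dim k) -> vec (heis2_pow_dim k),
  nilpotent_lie br /\ exists B : 'I_k.+1 -> 'I_(heis2_pow_dim k) -> vec (heis2_pow_dim k),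
    (forall j, nice_basis br (B j)) /\
    (forall j : 'I_k.+1, count_ad_rank_ge2 br (B j) = 4 * j)%N.
Proof.
elim: k => [|k [br [Nbr [B [B_nice B_count]]]]].
  exists (@abelian_br 0); split; first exact: abelian_nilpotent.
  exists (fun _ => @std_basis 0); split; first by move=> _; exact: std_nice_abelian.
  by move=> j; rewrite (ord1 j) /count_ad_rank_ge2 big_ord0.
have Hbr : is_lie_bracket br by case: Nbr.
have B_basis j : is_basis (B j) by case: (B_nice j).
have heis2_lie := dsum_lie heis_lie heis_lie.
pose std2 := dbasis (@std_basis 3) (@std_basis 3).
have std2_basis : is_basis std2 := dbasis_is_basis (std_is_basis 3) (std_is_basis 3).
have std2_nice : nice_basis heis2 std2 :=
  dsum_nice (std_is_basis 3) (std_is_basis 3) heis_lie heis_lie heis_std_nice heis_std_nice.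
exists (dsum br heis2); split.
  exact: dsum_nilpotent Nbr (dsum_nilpotent heis_nilpotent heis_nilpotent).
exists (fun j => if unlift ord_max j is Some j' then dbasis (B j') std2
  else dbasis (B ord_max) twisted).
split=> j; case: unliftP => [j' j_lift|j_max].
- exact: dsum_nice (B_basis j') std2_basis Hbr heis2_lie (B_nice j') std2_nice.
- exact: dsum_nice (B_basis _) twisted_is_basis Hbr heis2_lie (B_nice _) twisted_nice.
- rewrite (count_ad_rank_ge2_dsum _ _ Hbr heis2_lie) count_std_heis2 B_count.
  by rewrite addn0 j_lift lift_max.
- rewrite (count_ad_rank_ge2_dsum _ _ Hbr heis2_lie) count_twisted B_count.
  by rewrite j_max /= mulnS addnC.
Qed.

Lemma carries_heis2_pow k : carries (heis2_pow_dim k) k.+1.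
Proof.
have [br [Nbr [B [B_nice B_count]]]] := heis2_pow_bases k.
have Hbr : is_lie_bracket br by case: Nbr.
have B_basis i : is_basis (B i) by case: (B_nice i).
exists br; split=> //; exists B; split=> // j l jl.
move=> /(count_ad_rank_ge2_equiv Hbr (B_basis j) (B_basis l)); rewrite !B_count.
by move=> /eqP; rewrite eqn_mul2l /= => /eqP /val_inj jl'; rewrite jl' eqxx in jl.
Qed.

Lemma carries_addn n m r : carries n m -> carries (n + r) m.
Proof. by move=> nm; elim: r => [|r IH]; rewrite ?addn0 // addnS; exact: carries_succ. Qed.

Lemma carries_divn6 n : carries n (n %/ 6).+1.
Proof.
have := carries_addn (n %% 6) (carries_heis2_pow (n %/ 6)).
by rewrite heis2_pow_dimE mulnC -divn_eq.
Qed.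

Lemma carries_le_f n m : carries n m -> ((m%:R)%:E <= f n :> \bar RR)%E.
Proof. by move=> nm; apply: ereal_sup_ubound; exists m. Qed.

Theorem mainTheorem1 :
  (forall n : nat, (f n <= f n.+1)%E) /\
  (forall M : RR, exists n : nat, (M%:E < f n)%E) /\
  (forall n : nat, (((n %/ 6)%N.+1)%:R%:E <= f n :> \bar RR)%E).
Proof.
split.
  move=> n; apply: le_ereal_sup => _ [m nm <-]; exists m => //.
  exact: carries_succ.
split; last by move=> n; exact/carries_le_f/carries_divn6.
move=> M; pose N := Num.Def.archi_bound `|M|.
exists (6 * N)%N; apply: lt_le_trans (carries_le_f (carries_divn6 (6 * N))).
rewrite mulKn // lte_fin (le_lt_trans (ler_norm M)) //.
by rewrite (lt_trans (archi_boundP (normr_ge0 M))) // ltr_nat.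
Qed.
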